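(* For $\theta\in(-\pi,\pi]$ let $U(\theta)=R\sigma^+R^\dagger$ with $R=e^{-i\theta\sigma^y/2}$ (so $U(\theta)$ annihilates the pure state with Bloch vector $(\sin\theta,0,\cos\theta)$), and for a probability density $p$ on $(-\pi,\pi]$ consider the qubit Lindblad equation $\partial_t\rho=\int p(\theta)\,\mathcal D(U(\theta))\rho\,d\theta$, with stationary state $\rho_\oplus$ and fidelity $F_\infty=\langle\uparrow|\rho_\oplus|\uparrow\rangle$ with $|\uparrow\rangle$. (i) If $p$ is uniform on $[-\tilde\theta,\tilde\theta]$ with $0<\tilde\theta\le\pi$, then $F_\infty=\tfrac12+\tfrac{4\sin\tilde\theta}{6\tilde\theta+\sin2\tilde\theta}=1-\tfrac{\tilde\theta^4}{80}+O(\tilde\theta^6)$ as $\tilde\theta\to0$. (ii) If $p(\theta)=\frac{e^{\sigma^{-2}\cos\theta}}{2\pi I_0(\sigma^{-2})}$ (von Mises) with $\sigma>0$, then $F_\infty=\tfrac12+\Big(\tfrac{2I_0(\sigma^{-2})}{I_1(\sigma^{-2})}-\sigma^2\Big)^{-1}=1-\tfrac{3}{16}\sigma^4+O(\sigma^6)$ as $\sigma\to0$. In both cases the off-diagonal entry of $\rho_\oplus$ in the basis $\{|\uparrow\rangle,|\downarrow\rangle\}$ vanishes.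
   Context: $\sigma^+=|\uparrow\rangle\langle\downarrow|$; $\mathcal D(L)\rho:=L\rho L^\dagger-\tfrac12\{L^\dagger L,\rho\}$; $I_\nu$ denotes the modified Bessel function of the first kind of order $\nu$. *)

From Stdlib Require Import Reals.
From Coquelicot Require Import Coquelicot.
Open Scope R_scope.

(* 2x2 complex matrices, written in the basis {|up>, |down>} (index 1 = up, 2 = down). *)
Record M2 := mkM2 { m11 : C; m12 : C; m21 : C; m22 : C }.

Definition M2add (A B : M2) : M2 :=
  mkM2 (Cplus (m11 A) (m11 B)) (Cplus (m12 A) (m12 B))
       (Cplus (m21 A) (m21 B)) (Cplus (m22 A) (m22 B)).
Definition M2sub (A B : M2) : M2 :=
  mkM2 (Cminus (m11 A) (m11 B)) (Cminus (m12 A) (m12 B))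
       (Cminus (m21 A) (m21 B)) (Cminus (m22 A) (m22 B)).
Definition M2scale (c : C) (A : M2) : M2 :=
  mkM2 (Cmult c (m11 A)) (Cmult c (m12 A)) (Cmult c (m21 A)) (Cmult c (m22 A)).
Definition M2mul (A B : M2) : M2 :=
  mkM2 (Cplus (Cmult (m11 A) (m11 B)) (Cmult (m12 A) (m21 B)))
       (Cplus (Cmult (m11 A) (m12 B)) (Cmult (m12 A) (m22 B)))
       (Cplus (Cmult (m21 A) (m11 B)) (Cmult (m22 A) (m21 B)))
       (Cplus (Cmult (m21 A) (m12 B)) (Cmult (m22 A) (m22 B))).
Definition M2dag (A : M2) : M2 :=
  mkM2 (Cconj (m11 A)) (Cconj (m21 A)) (Cconj (m12 A)) (Cconj (m22 A)).
Definition M2zero : M2 := mkM2 (RtoC 0) (RtoC 0) (RtoC 0) (RtoC 0).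
Definition M2id : M2 := mkM2 (RtoC 1) (RtoC 0) (RtoC 0) (RtoC 1).

Definition sigma_plus : M2 := mkM2 (RtoC 0) (RtoC 1) (RtoC 0) (RtoC 0).
Definition sigma_y : M2 := mkM2 (RtoC 0) (Copp Ci) Ci (RtoC 0).

(* R(theta) = exp(-i theta sigma^y / 2) = cos(theta/2) I - i sin(theta/2) sigma^y
   (exponential series summed using (sigma^y)^2 = I). *)
Definition Rrot (theta : R) : M2 :=
  M2sub (M2scale (RtoC (cos (theta / 2))) M2id)
        (M2scale (Cmult Ci (RtoC (sin (theta / 2)))) sigma_y).

Definition Ujump (theta : R) : M2 :=
  M2mul (M2mul (Rrot theta) sigma_plus) (M2dag (Rrot theta)).

Definition dissipator (L rho : M2) : M2 :=
  M2sub (M2mul (M2mul L rho) (M2dag L))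
        (M2scale (RtoC (1/2))
           (M2add (M2mul (M2mul (M2dag L) L) rho) (M2mul rho (M2mul (M2dag L) L)))).

Definition lindblad_gen (p : R -> R) (rho : M2) : M2 :=
  let f := fun (g : M2 -> C) => RInt (V := C_R_CompleteNormedModule)
             (fun th => Cmult (RtoC (p th)) (g (dissipator (Ujump th) rho))) (-PI) PI in
  mkM2 (f m11) (f m12) (f m21) (f m22).

Definition is_density (rho : M2) : Prop :=
  M2dag rho = rho /\
  (forall v1 v2 : C,
     0 <= Re (Cplus (Cmult (Cconj v1) (Cplus (Cmult (m11 rho) v1) (Cmult (m12 rho) v2)))
                    (Cmult (Cconj v2) (Cplus (Cmult (m21 rho) v1) (Cmult (m22 rho) v2))))) /\
  Cplus (m11 rho) (m22 rho) = RtoC 1.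

Definition is_stationary (p : R -> R) (rho : M2) : Prop :=
  is_density rho /\ lindblad_gen p rho = M2zero.

Definition p_uniform (tt : R) (th : R) : R :=
  if Rle_dec (Rabs th) tt then / (2 * tt) else 0.

Definition BesselI (n : nat) (x : R) : R :=
  Series (fun k => (x / 2) ^ (2 * k + n) / (INR (Factorial.fact k) * INR (Factorial.fact (k + n)))).

Definition p_vonMises (sigma : R) (th : R) : R :=
  exp (/ sigma ^ 2 * cos th) / (2 * PI * BesselI 0 (/ sigma ^ 2)).

Definition F_uniform (tt : R) : R := 1/2 + 4 * sin tt / (6 * tt + sin (2 * tt)).
Definition F_vonMises (sigma : R) : R :=
  1/2 + / (2 * BesselI 0 (/ sigma ^ 2) / BesselI 1 (/ sigma ^ 2) - sigma ^ 2).

(* U(theta) is the jump operator |n><n_perp| of the half-angle vector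
   n = (cos(theta/2), sin(theta/2)), so D(U(theta)) rho depends on theta only through
   the six weights 1, cos^2, sin cos, cos, sin^2, sin of theta; hence the averaged
   generator is determined by the corresponding six moments of p (moment_form).  When
   the sin and sin cos moments vanish, its unit-trace kernel is the single diagonal
   matrix with fidelity 1/2 + A / (Z + P), where Z, P, A are the moments of 1, cos^2,
   cos; positivity of p makes this a density matrix (stationary_states).
   (i)  For the uniform density the moments are elementary integrals, giving the
        closed form; its expansion comes from the Taylor remainder of sine.
   (ii) For the von Mises density, I_0 and I_1 are identified with the integrals of
        exp (k cos) and exp (k cos) cos (k = sigma^(-2)) by integrating the exponential
        series term by term (Wallis integrals); the remaining moments follow by
        integration by parts.  The expansion uses the moments of (1 - cos)^j against
        exp (k cos): a three-term recursion expresses the needed ratio through the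
        fourth one, which is O(sigma^6) relative to the zeroth. *)

From Stdlib Require Import Reals Lra Lia Nsatz Factorial.
From Coquelicot Require Import Coquelicot.
Open Scope R_scope.

Lemma C_ext (x y : C) : fst x = fst y -> snd x = snd y -> x = y.
Proof. destruct x, y; simpl; intros; subst; reflexivity. Qed.

Definition cmix (w1 w2 w3 w4 : R) (K1 K2 K3 K4 : C) : C :=
  Cplus (Cplus (Cmult (RtoC w1) K1) (Cmult (RtoC w2) K2))
        (Cplus (Cmult (RtoC w3) K3) (Cmult (RtoC w4) K4)).

(* Every dissipator D(U(theta)) rho, and hence every average of them, is a linear
   combination of the six weights 1, cos^2, sin cos, cos, sin^2, sin of theta.  With
   Z, P, Q, A, T, S the corresponding averaged weights, the result is this matrix. *)
Definition moment_form (Z P Q A T S : R) (a b c d : C) : M2 :=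
  mkM2
  (cmix Z P Q A
    (Cmult (RtoC (-1/4)) (Cminus a d)) (Cmult (RtoC (-1/4)) (Cminus a d))
    (Cmult (RtoC (-1/4)) (Cplus b c)) (Cmult (RtoC (1/2)) (Cplus a d)))
  (cmix Z T Q S
    (Cmult (RtoC (-1/2)) b) (Cmult (RtoC (-1/4)) (Cplus b c))
    (Cmult (RtoC (-1/4)) (Cminus a d)) (Cmult (RtoC (1/2)) (Cplus a d)))
  (cmix Z T Q S
    (Cmult (RtoC (-1/2)) c) (Cmult (RtoC (-1/4)) (Cplus b c))
    (Cmult (RtoC (-1/4)) (Cminus a d)) (Cmult (RtoC (1/2)) (Cplus a d)))
  (cmix Z P Q A
    (Cmult (RtoC (1/4)) (Cminus a d)) (Cmult (RtoC (1/4)) (Cminus a d))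
    (Cmult (RtoC (1/4)) (Cplus b c)) (Cmult (RtoC (-1/2)) (Cplus a d))).

(* The jump operator |n><n_perp| for the unit vector n = (x, y). *)
Definition jump_op (x y : R) : M2 :=
  mkM2 (RtoC (- x * y)) (RtoC (x * x)) (RtoC (- y * y)) (RtoC (x * y)).

Lemma Ujump_half_angle (th : R) : Ujump th = jump_op (cos (th / 2)) (sin (th / 2)).
Proof.
  unfold Ujump, Rrot, jump_op, M2mul, M2sub, M2scale, M2dag, M2id, sigma_y, sigma_plus;
    cbn [m11 m12 m21 m22].
  f_equal; apply C_ext; simpl; ring.
Qed.

(* The dissipator of a jump operator, in terms of the doubled angle
   (x^2 - y^2, 2xy) = (cos, sin). *)
Lemma dissipator_jump_op (x y : R) (a b c d : C) : x * x + y * y = 1 ->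
  dissipator (jump_op x y) (mkM2 a b c d) =
  moment_form 1 ((x*x - y*y) ^ 2) ((2*x*y) * (x*x - y*y)) (x*x - y*y)
                ((2*x*y) ^ 2) (2*x*y) a b c d.
Proof.
  destruct a as [a1 a2], b as [b1 b2], c as [c1 c2], d as [d1 d2]. intros Hxy.
  (* nsatz needs the inverses of 2 and 4 among its hypotheses *)
  assert (H4 : 4 * / 4 = 1) by field. assert (H2 : 2 * / 2 = 1) by field.
  unfold jump_op, moment_form, cmix, dissipator, M2sub, M2scale, M2mul, M2dag, M2add;
    cbn [m11 m12 m21 m22].
  f_equal; apply C_ext; simpl; unfold Rdiv; nsatz.
Qed.

Lemma dissipator_Ujump (th : R) (a b c d : C) :
  dissipator (Ujump th) (mkM2 a b c d) =
  moment_form 1 (cos th ^ 2) (sin th * cos th) (cos th) (sin th ^ 2) (sin th) a b c d.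
Proof.
  rewrite Ujump_half_angle, dissipator_jump_op.
  2: { rewrite <- (sin2_cos2 (th / 2)); unfold Rsqr; ring. }
  replace (cos (th/2) * cos (th/2) - sin (th/2) * sin (th/2)) with (cos th)
    by (replace th with (2 * (th / 2)) at 1 by field; rewrite cos_2a; ring).
  replace (2 * cos (th/2) * sin (th/2)) with (sin th)
    by (replace th with (2 * (th / 2)) at 1 by field; rewrite sin_2a; ring).
  reflexivity.
Qed.

Lemma is_RInt_RtoC_mult (f : R -> R) (a b I : R) (K : C) :
  is_RInt f a b I ->
  is_RInt (V := C_R_CompleteNormedModule) (fun t => Cmult (RtoC (f t)) K) a b
    (Cmult (RtoC I) K).
Proof.
  intro Hf. destruct K as [k1 k2].
  replace (Cmult (RtoC I) (k1, k2)) with (I * k1, I * k2) by (apply C_ext; simpl; ring).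
  eapply is_RInt_ext.
  { intros t _. instantiate (1 := fun t => (f t * k1, f t * k2)). apply C_ext; simpl; ring. }
  apply (is_RInt_fct_extend_pair (U := R_NormedModule) (V := R_NormedModule)); simpl.
  - replace (I * k1) with (scal k1 I) by (unfold scal; simpl; unfold mult; simpl; ring).
    eapply is_RInt_ext; [intros; apply Rmult_comm | apply (is_RInt_scal _ _ _ _ _ Hf)].
  - replace (I * k2) with (scal k2 I) by (unfold scal; simpl; unfold mult; simpl; ring).
    eapply is_RInt_ext; [intros; apply Rmult_comm | apply (is_RInt_scal _ _ _ _ _ Hf)].
Qed.

Lemma is_RInt_cmix (p w1 w2 w3 w4 : R -> R) (K1 K2 K3 K4 : C) (I1 I2 I3 I4 a b : R) :
  is_RInt (fun t => p t * w1 t) a b I1 ->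
  is_RInt (fun t => p t * w2 t) a b I2 ->
  is_RInt (fun t => p t * w3 t) a b I3 ->
  is_RInt (fun t => p t * w4 t) a b I4 ->
  is_RInt (V := C_R_CompleteNormedModule)
    (fun t => Cmult (RtoC (p t)) (cmix (w1 t) (w2 t) (w3 t) (w4 t) K1 K2 K3 K4)) a b
    (cmix I1 I2 I3 I4 K1 K2 K3 K4).
Proof.
  intros H1 H2 H3 H4.
  eapply is_RInt_ext.
  { intros t _.
    instantiate (1 := fun t =>
      cmix (p t * w1 t) (p t * w2 t) (p t * w3 t) (p t * w4 t) K1 K2 K3 K4).
    unfold cmix. destruct K1, K2, K3, K4. apply C_ext; simpl; ring. }
  unfold cmix.
  apply (is_RInt_plus (V := C_R_CompleteNormedModule));
    apply (is_RInt_plus (V := C_R_CompleteNormedModule));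
    apply is_RInt_RtoC_mult; assumption.
Qed.

Lemma lindblad_gen_moments (p : R -> R) (Z P Q A T S : R) (a b c d : C) :
  is_RInt p (-PI) PI Z ->
  is_RInt (fun t => p t * cos t ^ 2) (-PI) PI P ->
  is_RInt (fun t => p t * (sin t * cos t)) (-PI) PI Q ->
  is_RInt (fun t => p t * cos t) (-PI) PI A ->
  is_RInt (fun t => p t * sin t ^ 2) (-PI) PI T ->
  is_RInt (fun t => p t * sin t) (-PI) PI S ->
  lindblad_gen p (mkM2 a b c d) = moment_form Z P Q A T S a b c d.
Proof.
  intros HZ HP HQ HA HT HS.
  assert (HZ1 : is_RInt (fun t => p t * 1) (-PI) PI Z)
    by (eapply is_RInt_ext; [intros; symmetry; apply Rmult_1_r | exact HZ]).
  unfold lindblad_gen, moment_form; f_equal; apply is_RInt_unique;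
    (eapply is_RInt_ext;
       [intros t _; rewrite dissipator_Ujump; unfold moment_form; cbn [m11 m12 m21 m22];
        reflexivity | ]);
    apply is_RInt_cmix; assumption.
Qed.

Lemma sin2_moment (p : R -> R) (a b Z P : R) :
  is_RInt p a b Z -> is_RInt (fun t => p t * cos t ^ 2) a b P ->
  is_RInt (fun t => p t * sin t ^ 2) a b (Z - P).
Proof.
  intros HZ HP.
  eapply is_RInt_ext; [| exact (is_RInt_minus _ _ _ _ _ _ HZ HP)].
  intros t _. unfold minus, plus, opp; simpl.
  pose proof (sin2_cos2 t) as E; unfold Rsqr in E. nsatz.
Qed.

(* The value of the fidelity predicted by the moments Z, P, A of 1, cos^2, cos. *)
Definition moment_fidelity (Z P A : R) : R := 1 / 2 + A / (Z + P).

Lemma moment_form_kernel (Z P A : R) (a b c d : C) :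
  0 < Z -> 0 <= P <= Z -> Cplus a d = RtoC 1 ->
  moment_form Z P 0 A (Z - P) 0 a b c d = M2zero ->
  a = RtoC (moment_fidelity Z P A) /\ b = RtoC 0 /\ c = RtoC 0.
Proof.
  intros HZ HP Htr Hker.
  destruct a as [a1 a2], b as [b1 b2], c as [c1 c2], d as [d1 d2].
  pose proof (f_equal fst Htr) as T1. pose proof (f_equal snd Htr) as T2.
  pose proof (f_equal (fun M => fst (m11 M)) Hker) as F1.
  pose proof (f_equal (fun M => snd (m11 M)) Hker) as G1.
  pose proof (f_equal (fun M => fst (m12 M)) Hker) as F2.
  pose proof (f_equal (fun M => snd (m12 M)) Hker) as G2.
  pose proof (f_equal (fun M => fst (m21 M)) Hker) as F3.
  pose proof (f_equal (fun M => snd (m21 M)) Hker) as G3.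
  clear Htr Hker. unfold moment_form, cmix, M2zero in *.
  simpl in T1, T2, F1, G1, F2, G2, F3, G3.
  (* (Z + P)(a - d) = 2 A tr(rho), and Z (b - c) = 0, (2 Z - P)(b + c) = 0 *)
  assert (Had : (Z + P) * (a1 - d1) = 2 * A /\ (Z + P) * (a2 - d2) = 0) by (split; nra).
  assert (Hbc : b1 = c1 /\ b2 = c2) by (split; nra).
  destruct Hbc as [<- <-].
  assert (Hb : b1 = 0 /\ b2 = 0) by (split; nra).
  destruct Hb as [-> ->].
  unfold moment_fidelity.
  split; [| split]; apply C_ext; simpl; try reflexivity.
  - assert (E : a1 - d1 = 2 * A / (Z + P))
      by (apply (Rmult_eq_reg_l (Z + P)); [rewrite (proj1 Had); field |]; lra).
    unfold Rdiv in *. lra.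
  - assert (E : a2 - d2 = 0) by (apply (Rmult_eq_reg_l (Z + P)); lra).
    lra.
Qed.

Lemma moment_form_diag (Z P A : R) : 0 < Z + P ->
  let f := moment_fidelity Z P A in
  moment_form Z P 0 A (Z - P) 0 (RtoC f) (RtoC 0) (RtoC 0) (RtoC (1 - f)) = M2zero.
Proof.
  intros HZP f. unfold f, moment_fidelity, moment_form, cmix, M2zero.
  f_equal; apply C_ext; simpl; field; lra.
Qed.

Lemma diag_density (f : R) : 0 <= f <= 1 ->
  is_density (mkM2 (RtoC f) (RtoC 0) (RtoC 0) (RtoC (1 - f))).
Proof.
  intros Hf. split; [| split].
  - unfold M2dag; cbn [m11 m12 m21 m22]. f_equal; apply C_ext; simpl; ring.
  - intros [x1 x2] [y1 y2]. cbn [m11 m12 m21 m22]. simpl.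
    assert (0 <= f * (x1 * x1 + x2 * x2)) by (apply Rmult_le_pos; nra).
    assert (0 <= (1 - f) * (y1 * y1 + y2 * y2)) by (apply Rmult_le_pos; nra).
    lra.
  - cbn [m11 m22]. apply C_ext; simpl; ring.
Qed.

Lemma moment_nonneg (p w : R -> R) (I : R) :
  (forall t, -PI < t < PI -> 0 <= p t) -> (forall t, 0 <= w t) ->
  is_RInt (fun t => p t * w t) (-PI) PI I -> 0 <= I.
Proof.
  intros Hp Hw HI. pose proof PI_RGT_0.
  apply (is_RInt_ge_0 _ (-PI) PI _ ltac:(lra) HI).
  intros t Ht. apply Rmult_le_pos; [apply Hp; lra | apply Hw].
Qed.

(* Positivity of p constrains its moments: integrating against sin^2, cos^2 and
   (1 +- cos)^2 gives 0 <= P <= Z and |2A| <= Z + P. *)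
Lemma moment_bounds (p : R -> R) (Z P A : R) :
  (forall t, -PI < t < PI -> 0 <= p t) ->
  is_RInt p (-PI) PI Z ->
  is_RInt (fun t => p t * cos t ^ 2) (-PI) PI P ->
  is_RInt (fun t => p t * cos t) (-PI) PI A ->
  0 <= P <= Z /\ Rabs (2 * A) <= Z + P.
Proof.
  intros Hp HZ HP HA.
  assert (Hsq : forall (s : R), is_RInt (fun t => p t * (1 + s * cos t) ^ 2) (-PI) PI
                                  (Z + s * s * P + 2 * s * A)).
  { intros s. eapply is_RInt_ext;
      [| exact (is_RInt_plus _ _ _ _ _ _
                  (is_RInt_plus _ _ _ _ _ _ HZ (is_RInt_scal _ _ _ (s * s) _ HP))
                  (is_RInt_scal _ _ _ (2 * s) _ HA))].
    intros t _. unfold plus, scal; simpl; unfold mult; simpl. ring. }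
  pose proof (moment_nonneg _ _ _ Hp (fun t => pow2_ge_0 (cos t)) HP).
  pose proof (moment_nonneg _ _ _ Hp (fun t => pow2_ge_0 (sin t)) (sin2_moment _ _ _ _ _ HZ HP)).
  pose proof (moment_nonneg _ _ _ Hp (fun t => pow2_ge_0 (1 + 1 * cos t)) (Hsq 1)).
  pose proof (moment_nonneg _ _ _ Hp (fun t => pow2_ge_0 (1 + -1 * cos t)) (Hsq (-1))).
  split; [lra | apply Rabs_le; lra].
Qed.

Lemma stationary_states (p : R -> R) (Z P A : R) :
  (forall t, -PI < t < PI -> 0 <= p t) -> 0 < Z ->
  is_RInt p (-PI) PI Z ->
  is_RInt (fun t => p t * cos t ^ 2) (-PI) PI P ->
  is_RInt (fun t => p t * cos t) (-PI) PI A ->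
  is_RInt (fun t => p t * (sin t * cos t)) (-PI) PI 0 ->
  is_RInt (fun t => p t * sin t) (-PI) PI 0 ->
  (exists rho, is_stationary p rho) /\
  (forall rho, is_stationary p rho ->
     m11 rho = RtoC (moment_fidelity Z P A) /\ m12 rho = RtoC 0 /\ m21 rho = RtoC 0).
Proof.
  intros Hp HZpos HZ HP HA HQ HS.
  destruct (moment_bounds p Z P A Hp HZ HP HA) as [HPZ HAZ].
  pose proof (sin2_moment _ _ _ _ _ HZ HP) as HT.
  assert (HZP : 0 < Z + P) by lra.
  split.
  - exists (mkM2 (RtoC (moment_fidelity Z P A)) (RtoC 0) (RtoC 0)
                 (RtoC (1 - moment_fidelity Z P A))).
    split; [apply diag_density | ].
    + assert (Rabs (A / (Z + P)) <= 1 / 2).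
      { unfold Rdiv. rewrite Rabs_mult, Rabs_inv, (Rabs_right (Z + P)) by lra.
        apply (Rmult_le_reg_r (Z + P)); [lra |].
        field_simplify; [rewrite Rabs_mult, Rabs_right in HAZ |]; lra. }
      apply Rabs_le_between in H. unfold moment_fidelity. lra.
    + rewrite (lindblad_gen_moments p Z P 0 A (Z - P) 0); auto.
      apply moment_form_diag; exact HZP.
  - intros [a b c d] [[_ [_ Htr]] Hgen].
    rewrite (lindblad_gen_moments p Z P 0 A (Z - P) 0) in Hgen; auto.
    exact (moment_form_kernel Z P A a b c d HZpos HPZ Htr Hgen).
Qed.

(* Continuity goals for explicit smooth functions follow from differentiability. *)
Ltac solve_continuity :=
  intro; apply (ex_derive_continuous (K := R_AbsRing) (V := R_NormedModule));
  auto_derive; auto.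

Lemma is_RInt_zero (a b : R) : is_RInt (fun _ : R => 0) a b 0.
Proof.
  pose proof (is_RInt_const (V := R_NormedModule) a b 0) as H.
  replace (scal (b - a) (0 : R_NormedModule)) with 0 in H
    by (unfold scal; simpl; unfold mult; simpl; ring).
  exact H.
Qed.

Lemma uniform_moment (tt I : R) (w W : R -> R) :
  0 < tt <= PI ->
  (forall x, is_derive W x (w x)) -> (forall x, continuous w x) ->
  I = (W tt - W (- tt)) / (2 * tt) ->
  is_RInt (fun x => p_uniform tt x * w x) (-PI) PI I.
Proof.
  intros Ht HW Hw ->.
  assert (Hin : forall x, -tt <= x <= tt -> p_uniform tt x = / (2 * tt)).
  { intros x Hx. unfold p_uniform.
    destruct (Rle_dec (Rabs x) tt) as [_ | h]; [reflexivity | exfalso; apply h, Rabs_le; lra]. }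
  assert (Hout : forall x, tt < Rabs x -> p_uniform tt x = 0).
  { intros x Hx. unfold p_uniform. destruct (Rle_dec (Rabs x) tt); [lra | reflexivity]. }
  replace ((W tt - W (-tt)) / (2 * tt)) with (plus (plus 0 ((W tt - W (-tt)) / (2 * tt))) 0)
    by (unfold plus; simpl; ring).
  apply (is_RInt_Chasles (V := R_NormedModule) _ (-PI) tt PI);
    [apply (is_RInt_Chasles (V := R_NormedModule) _ (-PI) (-tt) tt) |].
  - eapply is_RInt_ext; [| apply (is_RInt_zero (-PI) (-tt))].
    intros x Hx. rewrite Rmin_left, Rmax_right in Hx by lra.
    rewrite Hout; [simpl; ring | rewrite Rabs_left; lra].
  - replace ((W tt - W (-tt)) / (2 * tt)) with (scal (/ (2 * tt)) (minus (W tt) (W (-tt))))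
      by (unfold scal, minus, plus, opp; simpl; unfold mult; simpl; field; lra).
    eapply is_RInt_ext.
    2: { apply (is_RInt_scal w (-tt) tt (/ (2 * tt))).
         apply (is_RInt_derive W w); intros; [apply HW | apply Hw]. }
    intros x Hx. rewrite Rmin_left, Rmax_right in Hx by lra.
    rewrite Hin by lra. reflexivity.
  - eapply is_RInt_ext; [| apply (is_RInt_zero tt PI)].
    intros x Hx. rewrite Rmin_left, Rmax_right in Hx by lra.
    rewrite Hout; [simpl; ring | rewrite Rabs_right; lra].
Qed.

(* Part (i), exact formula: the moments of the uniform density are
   Z = 1, P = (tt + sin tt cos tt) / (2 tt), A = sin tt / tt, and the odd ones vanish. *)
Lemma uniform_stationary (tt : R) : 0 < tt <= PI ->
  (exists rho, is_stationary (p_uniform tt) rho) /\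
  (forall rho, is_stationary (p_uniform tt) rho ->
     m11 rho = RtoC (F_uniform tt) /\ m12 rho = RtoC 0 /\ m21 rho = RtoC 0).
Proof.
  intros Ht.
  set (P := (tt + sin tt * cos tt) / (2 * tt)).
  assert (Hp : forall t, -PI < t < PI -> 0 <= p_uniform tt t).
  { intros t _; unfold p_uniform; destruct (Rle_dec (Rabs t) tt); [|lra].
    left; apply Rinv_0_lt_compat; lra. }
  assert (HZ : is_RInt (p_uniform tt) (-PI) PI 1).
  { eapply is_RInt_ext; [| apply (uniform_moment tt 1 (fun _ => 1) (fun x => x))];
      [intros; simpl; ring | lra | intros; auto_derive; auto | solve_continuity | field; lra]. }
  assert (HP : is_RInt (fun x => p_uniform tt x * cos x ^ 2) (-PI) PI P).
  { apply (uniform_moment tt P _ (fun x => (x + sin x * cos x) / 2)); [lra | | solve_continuity |].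
    - intros x; auto_derive; auto. pose proof (sin2_cos2 x); unfold Rsqr in *; nra.
    - unfold P. rewrite sin_neg, cos_neg; field; lra. }
  assert (HA : is_RInt (fun x => p_uniform tt x * cos x) (-PI) PI (sin tt / tt)).
  { apply (uniform_moment tt _ cos sin); [lra | | solve_continuity |].
    - intros x; auto_derive; auto; ring.
    - rewrite sin_neg; field; lra. }
  assert (HQ : is_RInt (fun x => p_uniform tt x * (sin x * cos x)) (-PI) PI 0).
  { apply (uniform_moment tt _ _ (fun x => sin x ^ 2 / 2)); [lra | | solve_continuity |].
    - intros x; auto_derive; auto; field.
    - rewrite sin_neg; field; lra. }
  assert (HS : is_RInt (fun x => p_uniform tt x * sin x) (-PI) PI 0).
  { apply (uniform_moment tt _ sin (fun x => - cos x)); [lra | | solve_continuity |].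
    - intros x; auto_derive; auto; ring.
    - rewrite cos_neg; field; lra. }
  destruct (moment_bounds _ _ _ _ Hp HZ HP HA) as [[HP0 _] _].
  assert (HPpos : 0 <= tt + sin tt * cos tt).
  { replace (tt + sin tt * cos tt) with (P * (2 * tt)) by (unfold P; field; lra).
    apply Rmult_le_pos; lra. }
  replace (F_uniform tt) with (moment_fidelity 1 P (sin tt / tt))
    by (unfold F_uniform, moment_fidelity, P; rewrite sin_2a; field; lra).
  exact (stationary_states _ 1 P (sin tt / tt) Hp ltac:(lra) HZ HP HA HQ HS).
Qed.

Lemma sin_approx_deg7 (a : R) : sin_approx a 3 = a - a^3/6 + a^5/120 - a^7/5040.
Proof.
  unfold sin_approx; cbn [sum_f_R0]; unfold sin_term. rewrite !INR_IZR_INZ.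
  repeat match goal with |- context [Z.of_nat ?n] =>
    let v := eval vm_compute in (Z.of_nat n) in change (Z.of_nat n) with v end.
  simpl pow. field.
Qed.

Lemma sin_approx_deg9 (a : R) :
  sin_approx a 4 = a - a^3/6 + a^5/120 - a^7/5040 + a^9/362880.
Proof.
  unfold sin_approx; cbn [sum_f_R0]; unfold sin_term. rewrite !INR_IZR_INZ.
  repeat match goal with |- context [Z.of_nat ?n] =>
    let v := eval vm_compute in (Z.of_nat n) in change (Z.of_nat n) with v end.
  simpl pow. field.
Qed.

Lemma sin_taylor (a : R) : 0 <= a <= PI ->
  exists e, 0 <= e <= a^9/362880 /\ sin a = a - a^3/6 + a^5/120 - a^7/5040 + e.
Proof.
  intros Ha. destruct (sin_bound a 1 (proj1 Ha) (proj2 Ha)) as [L U].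
  change (2 * 1 + 1)%nat with 3%nat in L. change (2 * (1 + 1))%nat with 4%nat in U.
  rewrite sin_approx_deg7 in L; rewrite sin_approx_deg9 in U.
  exists (sin a - (a - a^3/6 + a^5/120 - a^7/5040)). split; [lra | ring].
Qed.

(* The numerator of F_uniform t - (1 - t^4/80) is O(t^7): the terms of order up
   to t^5 cancel. *)
Lemma uniform_numerator_bound (t : R) : 0 < t < 1 ->
  Rabs (320 * sin t - (40 - t^4) * (6 * t + sin (2 * t))) <= t^7.
Proof.
  intros Ht. pose proof PI2_1.
  destruct (sin_taylor t) as [e1 [He1 Hs1]]; [lra |].
  destruct (sin_taylor (2 * t)) as [e2 [He2 Hs2]]; [lra |].
  rewrite Hs1, Hs2.
  assert (t2 : 0 <= t^2 <= 1) by (split; nra).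
  assert (t4 : 0 <= t^4 <= 1) by (split; nra).
  assert (t7 : 0 < t^7) by (apply pow_lt; lra).
  assert (t9 : t^9 <= t^7) by (replace (t^9) with (t^7 * t^2) by ring; nra).
  assert (e1b : e1 <= t^7 / 362880) by lra.
  assert (e2b : e2 <= 512 * t^7 / 362880)
    by (replace ((2 * t)^9) with (512 * t^9) in He2 by ring; lra).
  assert (r : 0 <= (40 - t^4) * e2 <= 40 * (512 * t^7 / 362880)) by (split; nra).
  replace (320 * (t - t^3/6 + t^5/120 - t^7/5040 + e1) -
           (40 - t^4) * (6 * t + ((2*t) - (2*t)^3/6 + (2*t)^5/120 - (2*t)^7/5040 + e2)))
    with (t^7 * (-(8/21) + 4 * t^2/15 - 8 * t^4/315) + 320 * e1 - (40 - t^4) * e2)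
    by field.
  apply Rabs_le. split; nra.
Qed.

Lemma uniform_expansion : exists K delta : R, 0 < delta /\
  forall tt : R, 0 < tt < delta -> Rabs (F_uniform tt - (1 - tt ^ 4 / 80)) <= K * tt ^ 6.
Proof.
  exists 1, 1. split; [lra |]. intros t Ht.
  assert (HD : 6 * t <= 6 * t + sin (2 * t)).
  { pose proof PI2_1. assert (0 <= sin (2 * t)) by (apply sin_ge_0; lra). lra. }
  replace (F_uniform t - (1 - t ^ 4 / 80))
    with ((320 * sin t - (40 - t^4) * (6 * t + sin (2 * t))) / (80 * (6 * t + sin (2 * t))))
    by (unfold F_uniform; field; lra).
  rewrite Rabs_div, (Rabs_right (80 * _)) by lra.
  apply Rle_trans with (t^7 / (80 * (6 * t + sin (2 * t)))).
  - unfold Rdiv. apply Rmult_le_compat_r; [left; apply Rinv_0_lt_compat; lra |].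
    apply uniform_numerator_bound; lra.
  - apply (Rmult_le_reg_r (80 * (6 * t + sin (2 * t)))); [lra |].
    unfold Rdiv. rewrite Rmult_assoc, Rinv_l by lra.
    assert (0 < t^6) by (apply pow_lt; lra).
    replace (t^7) with (t^6 * t) by ring. nra.
Qed.

Lemma INR_fact_pos (n : nat) : 0 < INR (fact n).
Proof. apply lt_0_INR, lt_O_fact. Qed.

Definition wallis (n : nat) : R := RInt (fun x => cos x ^ n) (-PI) PI.

Lemma wallis_is (n : nat) : is_RInt (fun x => cos x ^ n) (-PI) PI (wallis n).
Proof.
  apply (RInt_correct (V := R_CompleteNormedModule)), ex_RInt_continuous.
  intros z _. revert z; solve_continuity.
Qed.

(* Integration by parts: (n + 2) wallis (n + 2) = (n + 1) wallis n, because
   (n + 2) cos^(n+2) - (n + 1) cos^n is the derivative of sin cos^(n+1). *)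
Lemma wallis_rec (n : nat) : INR (n + 2) * wallis (n + 2) = INR (n + 1) * wallis n.
Proof.
  set (g := fun x => INR (n + 2) * cos x ^ (n + 2) - INR (n + 1) * cos x ^ n).
  assert (Hg : is_RInt g (-PI) PI 0).
  { replace 0 with (minus (sin PI * cos PI ^ (n + 1)) (sin (-PI) * cos (-PI) ^ (n + 1)))
      by (rewrite sin_neg, sin_PI; unfold minus, plus, opp; simpl; ring).
    apply (is_RInt_derive (fun x => sin x * cos x ^ (n + 1))).
    - intros x _. unfold g. auto_derive; auto.
      replace (Init.Nat.pred (n + 1)) with n by lia.
      rewrite !pow_add, !plus_INR. simpl (INR 1); simpl (INR 2).
      pose proof (sin2_cos2 x) as E; unfold Rsqr in E. set (u := cos x ^ n). simpl pow. nsatz.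
    - intros x _; unfold g; revert x; solve_continuity. }
  assert (Hlin : is_RInt g (-PI) PI (INR (n + 2) * wallis (n + 2) - INR (n + 1) * wallis n))
    by exact (is_RInt_minus _ _ _ _ _ _ (is_RInt_scal _ _ _ _ _ (wallis_is (n + 2)))
                                        (is_RInt_scal _ _ _ _ _ (wallis_is n))).
  pose proof (is_RInt_unique _ _ _ _ Hg). pose proof (is_RInt_unique _ _ _ _ Hlin).
  simpl in *. lra.
Qed.

Lemma wallis_0 : wallis 0 = 2 * PI.
Proof.
  unfold wallis. simpl. rewrite (RInt_const (V := R_CompleteNormedModule)).
  unfold scal; simpl; unfold mult; simpl. ring.
Qed.

Lemma wallis_1 : wallis 1 = 0.
Proof.
  apply is_RInt_unique.
  replace 0 with (minus (sin PI) (sin (-PI)))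
    by (rewrite sin_neg, sin_PI; unfold minus, plus, opp; simpl; ring).
  eapply is_RInt_ext; [| apply (is_RInt_derive sin cos)].
  - intros x _; simpl; ring.
  - intros x _; apply is_derive_sin.
  - intros z _; revert z; solve_continuity.
Qed.

Lemma wallis_odd (k : nat) : wallis (2 * k + 1) = 0.
Proof.
  induction k as [| k IH]; [apply wallis_1 |].
  replace (2 * S k + 1)%nat with ((2 * k + 1) + 2)%nat by lia.
  pose proof (wallis_rec (2 * k + 1)) as E. rewrite IH, Rmult_0_r in E.
  assert (0 < INR (2 * k + 1 + 2)) by (apply lt_0_INR; lia).
  apply (Rmult_eq_reg_l (INR (2 * k + 1 + 2))); lra.
Qed.

Lemma wallis_even (k : nat) :
  wallis (2 * k) / INR (fact (2 * k)) = 2 * PI / (4 ^ k * INR (fact k) ^ 2).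
Proof.
  induction k as [| k IH]; [simpl; rewrite wallis_0; field |].
  replace (2 * S k)%nat with (2 * k + 2)%nat by lia.
  pose proof (wallis_rec (2 * k)) as E.
  replace (fact (2 * k + 2)) with ((2 * k + 2) * ((2 * k + 1) * fact (2 * k)))%nat
    by (replace (2 * k + 2)%nat with (S (S (2 * k))) by lia; simpl; lia).
  rewrite fact_simpl, !mult_INR, !plus_INR, !mult_INR, S_INR in *.
  change (INR 2) with (1 + 1) in *. change (INR 1) with 1 in *.
  replace (1 + 1) with 2 in * by ring.
  assert (F1 := INR_fact_pos (2 * k)). assert (F2 := INR_fact_pos k).
  assert (Hk := pos_INR k). assert (0 < 4 ^ k) by (apply pow_lt; lra).
  assert (Hstep : wallis (2 * k + 2) = (2 * INR k + 1) / (2 * INR k + 2) * wallis (2 * k)).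
  { apply (Rmult_eq_reg_l (2 * INR k + 2)); [rewrite E; field |]; lra. }
  rewrite Hstep.
  replace ((2 * INR k + 1) / (2 * INR k + 2) * wallis (2 * k) /
             ((2 * INR k + 2) * ((2 * INR k + 1) * INR (fact (2 * k)))))
    with ((wallis (2 * k) / INR (fact (2 * k))) / ((2 * INR k + 2) * (2 * INR k + 2)))
    by (field; lra).
  rewrite IH, S_INR. cbn [pow]. field. lra.
Qed.

Lemma fact_mult_le (n k : nat) : (fact n * fact k <= fact (n + k))%nat.
Proof.
  induction k as [| k IH]; [simpl; rewrite Nat.add_0_r; lia |].
  replace (n + S k)%nat with (S (n + k)) by lia.
  rewrite !fact_simpl. nia.
Qed.

Lemma exp_series (x : R) : is_series (fun k => x ^ k / INR (fact k)) (exp x).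
Proof.
  eapply is_series_ext; [| apply (is_exp_Reals x)].
  intros n. rewrite pow_n_pow. reflexivity.
Qed.

(* Remainder of the exponential series:
   |exp x - sum_{n <= N} x^n / n!| <= |x|^(N+1) / (N+1)! * exp |x|,
   since (N+1+k)! >= (N+1)! k! makes the tail dominated by a rescaled exp series. *)
Lemma exp_tail (x : R) (N : nat) :
  Rabs (exp x - sum_f_R0 (fun n => x ^ n / INR (fact n)) N) <=
  Rabs x ^ (S N) / INR (fact (S N)) * exp (Rabs x).
Proof.
  set (a := fun k => x ^ k / INR (fact k)).
  assert (Ht : is_series (fun k => a (S N + k)%nat) (exp x - sum_f_R0 a N)).
  { apply is_series_incr_n; [lia |]. simpl pred.
    assert (E : plus (exp x - sum_f_R0 a N) (sum_n a N) = exp x)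
      by (unfold plus; simpl; rewrite sum_n_Reals; ring).
    pose proof (exp_series x) as H. rewrite <- E in H. exact H. }
  set (c := Rabs x ^ (S N) / INR (fact (S N))).
  set (b := fun k => c * (Rabs x ^ k / INR (fact k))).
  assert (Hb : is_series b (c * exp (Rabs x)))
    by exact (is_series_scal_l c _ _ (exp_series (Rabs x))).
  assert (Hle : forall k, 0 <= Rabs (a (S N + k)%nat) <= b k).
  { intros k. split; [apply Rabs_pos |].
    unfold a, b, c. rewrite Rabs_div, <- RPow_abs, pow_add
      by (apply not_0_INR, fact_neq_0).
    rewrite (Rabs_right (INR _)) by (apply Rle_ge, pos_INR).
    assert (F1 := INR_fact_pos (S N)). assert (F2 := INR_fact_pos k).
    assert (F3 : INR (fact (S N)) * INR (fact k) <= INR (fact (S N + k)))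
      by (rewrite <- mult_INR; apply le_INR, fact_mult_le).
    assert (P1 : 0 <= Rabs x ^ S N) by (apply pow_le, Rabs_pos).
    assert (P2 : 0 <= Rabs x ^ k) by (apply pow_le, Rabs_pos).
    unfold Rdiv.
    replace (Rabs x ^ S N * / INR (fact (S N)) * (Rabs x ^ k * / INR (fact k)))
      with (Rabs x ^ S N * Rabs x ^ k * / (INR (fact (S N)) * INR (fact k))) by (field; lra).
    apply Rmult_le_compat_l; [nra |].
    apply Rinv_le_contravar; nra. }
  assert (Exb : ex_series b) by (eexists; exact Hb).
  assert (Exa : ex_series (fun k => Rabs (a (S N + k)%nat))).
  { apply (ex_series_le (K := R_AbsRing) (V := R_CompleteNormedModule) _ b); [| exact Exb].
    intros k. unfold norm; simpl. rewrite Rabs_Rabsolu. apply Hle. }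
  rewrite <- (is_series_unique _ _ Ht), <- (is_series_unique _ _ Hb).
  eapply Rle_trans; [apply Series_Rabs; exact Exa |].
  apply Series_le; [exact Hle | exact Exb].
Qed.

Lemma exp_tail_uniform (k c : R) (N : nat) : Rabs c <= 1 ->
  Rabs (exp (k * c) - sum_f_R0 (fun n => (k * c) ^ n / INR (fact n)) N) <=
  Rabs k ^ (S N) / INR (fact (S N)) * exp (Rabs k).
Proof.
  intros Hc. eapply Rle_trans; [apply exp_tail |].
  assert (H1 : Rabs (k * c) <= Rabs k).
  { rewrite Rabs_mult. pose proof (Rabs_pos k). pose proof (Rabs_pos c). nra. }
  assert (F := INR_fact_pos (S N)).
  apply Rmult_le_compat.
  - apply Rmult_le_pos; [apply pow_le, Rabs_pos | left; apply Rinv_0_lt_compat; lra].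
  - left; apply exp_pos.
  - unfold Rdiv. apply Rmult_le_compat_r; [left; apply Rinv_0_lt_compat; lra |].
    apply pow_incr. split; [apply Rabs_pos | exact H1].
  - destruct (Req_dec (Rabs (k * c)) (Rabs k)) as [E | E]; [rewrite E; lra |].
    left; apply exp_increasing; lra.
Qed.

(* The integrals  expcos_moment m k = int_{-pi}^{pi} exp (k cos) cos^m;  for m = 0, 1
   these are 2 pi I_0(k) and 2 pi I_1(k). *)
Definition expcos_moment (m : nat) (k : R) : R :=
  RInt (fun x => exp (k * cos x) * cos x ^ m) (-PI) PI.

Lemma expcos_moment_is (m : nat) (k : R) :
  is_RInt (fun x => exp (k * cos x) * cos x ^ m) (-PI) PI (expcos_moment m k).
Proof.
  apply (RInt_correct (V := R_CompleteNormedModule)), ex_RInt_continuous.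
  intros z _. revert z; solve_continuity.
Qed.

Definition expcos_partial (k : R) (N : nat) (x : R) : R :=
  sum_f_R0 (fun n => (k * cos x) ^ n / INR (fact n)) N.

Lemma expcos_partial_int (m : nat) (k : R) (N : nat) :
  is_RInt (fun x => expcos_partial k N x * cos x ^ m) (-PI) PI
    (sum_f_R0 (fun n => k ^ n / INR (fact n) * wallis (n + m)) N).
Proof.
  assert (Hterm : forall n, is_RInt (fun x => (k * cos x) ^ n / INR (fact n) * cos x ^ m)
                              (-PI) PI (k ^ n / INR (fact n) * wallis (n + m))).
  { intros n. eapply is_RInt_ext; [| apply (is_RInt_scal _ _ _ _ _ (wallis_is (n + m)))].
    intros x _. unfold scal; simpl; unfold mult; simpl. rewrite Rpow_mult_distr, pow_add.
    field. apply not_0_INR, fact_neq_0. }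
  induction N as [| N IH]; [exact (Hterm 0%nat) |].
  eapply is_RInt_ext; [| apply (is_RInt_plus _ _ _ _ _ _ IH (Hterm (S N)))].
  intros x _. unfold expcos_partial; simpl sum_f_R0. unfold plus; simpl. ring.
Qed.

Lemma expcos_moment_truncation (m : nat) (k : R) (N : nat) :
  Rabs (expcos_moment m k - sum_f_R0 (fun n => k ^ n / INR (fact n) * wallis (n + m)) N)
  <= 2 * PI * (Rabs k ^ (S N) / INR (fact (S N)) * exp (Rabs k)).
Proof.
  assert (Hd : is_RInt (fun x => (exp (k * cos x) - expcos_partial k N x) * cos x ^ m) (-PI) PI
                 (expcos_moment m k - sum_f_R0 (fun n => k^n / INR (fact n) * wallis (n + m)) N)).
  { eapply is_RInt_ext;
      [| exact (is_RInt_minus _ _ _ _ _ _ (expcos_moment_is m k) (expcos_partial_int m k N))].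
    intros x _. unfold minus, plus, opp; simpl. ring. }
  rewrite <- (is_RInt_unique _ _ _ _ Hd). pose proof PI_RGT_0.
  replace (2 * PI * _) with ((PI - - PI) * (Rabs k ^ (S N) / INR (fact (S N)) * exp (Rabs k)))
    by ring.
  apply abs_RInt_le_const; [lra | eexists; exact Hd |].
  intros t _. rewrite Rabs_mult.
  assert (Hc : Rabs (cos t) <= 1) by (apply Rabs_le, COS_bound).
  assert (Hp : Rabs (cos t ^ m) <= 1).
  { rewrite <- RPow_abs, <- (pow1 m). apply pow_incr. split; [apply Rabs_pos | exact Hc]. }
  pose proof (exp_tail_uniform k (cos t) N Hc). pose proof (Rabs_pos (cos t ^ m)).
  pose proof (Rabs_pos (exp (k * cos t) - expcos_partial k N t)).
  unfold expcos_partial in *. nra.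
Qed.

Lemma expcos_moment_series (m : nat) (k : R) :
  is_series (fun n => k ^ n / INR (fact n) * wallis (n + m)) (expcos_moment m k).
Proof.
  set (e := fun N : nat => 2 * PI * (Rabs k ^ (S N) / INR (fact (S N)) * exp (Rabs k))).
  assert (He : is_lim_seq e 0).
  { unfold e. replace (Finite 0) with (Rbar_mult (2 * PI) 0) by (simpl; f_equal; ring).
    apply is_lim_seq_scal_l.
    replace (Finite 0) with (Rbar_mult 0 (exp (Rabs k))) by (simpl; f_equal; ring).
    apply (is_lim_seq_scal_r (fun N => Rabs k ^ (S N) / INR (fact (S N)))).
    apply (is_lim_seq_incr_1 (fun N => Rabs k ^ N / INR (fact N))).
    apply ex_series_lim_0. eexists; apply exp_series. }
  assert (Hlim : is_lim_seq (sum_n (fun n => k ^ n / INR (fact n) * wallis (n + m)))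
                            (expcos_moment m k)).
  2: exact Hlim.
  apply is_lim_seq_le_le with (u := fun N => expcos_moment m k - e N)
                              (w := fun N => expcos_moment m k + e N).
  - intros N. pose proof (expcos_moment_truncation m k N) as Hb.
    apply Rabs_le_between in Hb. rewrite sum_n_Reals. unfold e. lra.
  - replace (Finite (expcos_moment m k)) with (Rbar_minus (expcos_moment m k) 0)
      by (simpl; f_equal; ring).
    apply is_lim_seq_minus'; [apply is_lim_seq_const | exact He].
  - replace (Finite (expcos_moment m k)) with (Rbar_plus (expcos_moment m k) 0)
      by (simpl; f_equal; ring).
    apply is_lim_seq_plus'; [apply is_lim_seq_const | exact He].
Qed.

Lemma series_pair (b : nat -> R) (l : R) :
  is_series b l -> is_series (fun k => b (2 * k)%nat + b (2 * k + 1)%nat) l.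
Proof.
  intros H.
  assert (E : forall K, sum_n (fun k => b (2 * k)%nat + b (2 * k + 1)%nat) K
                        = sum_n b (2 * K + 1)).
  { intros K. rewrite !sum_n_Reals. induction K as [| K IH]; [simpl; ring |].
    replace (2 * S K + 1)%nat with (S (S (2 * K + 1))) by lia.
    change (sum_f_R0 b (S (S (2 * K + 1))))
      with (sum_f_R0 b (2 * K + 1) + b (S (2 * K + 1)) + b (S (S (2 * K + 1)))).
    change (sum_f_R0 ?f (S K)) with (sum_f_R0 f K + f (S K)). rewrite IH.
    replace (S (2 * K + 1)) with (2 * S K)%nat by lia.
    replace (S (2 * S K)) with (2 * S K + 1)%nat by lia. lra. }
  assert (Hb : is_lim_seq (sum_n b) l) by exact H.
  assert (Hs := is_lim_seq_subseq _ _ (fun K => 2 * K + 1)%nat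
                  (eventually_subseq (fun K => 2 * K + 1)%nat ltac:(intros; cbv beta; lia)) Hb).
  assert (Hl : is_lim_seq (sum_n (fun k => b (2 * k)%nat + b (2 * k + 1)%nat)) l).
  { eapply is_lim_seq_ext; [| exact Hs]. intros K; simpl. rewrite E. reflexivity. }
  exact Hl.
Qed.

Lemma half_pow (k : R) (j : nat) : (k / 2) ^ (2 * j) = k ^ (2 * j) / 4 ^ j.
Proof.
  rewrite !pow_mult. replace ((k / 2) ^ 2) with (k ^ 2 * / 4) by field.
  rewrite Rpow_mult_distr, pow_inv. field. apply pow_nonzero; lra.
Qed.

(* The Bessel series of I_0 sums to expcos_moment 0 k / (2 pi): only the even Wallis
   integrals survive in the integrated exponential series, and they produce exactly
   the terms (k/2)^(2j) / (j!)^2. *)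
Lemma BesselI0_series (k : R) :
  is_series (fun j => (k / 2) ^ (2 * j + 0) / (INR (fact j) * INR (fact (j + 0))))
            (expcos_moment 0 k / (2 * PI)).
Proof.
  pose proof PI_RGT_0 as HPI.
  assert (H := is_series_scal_l (/ (2 * PI)) _ _ (series_pair _ _ (expcos_moment_series 0 k))).
  replace (expcos_moment 0 k / (2 * PI)) with (scal (/ (2 * PI)) (expcos_moment 0 k))
    by (unfold scal; simpl; unfold mult; simpl; field; lra).
  eapply is_series_ext; [| exact H].
  intros j. unfold scal; simpl; unfold mult; simpl.
  rewrite !Nat.add_0_r. replace (j + j)%nat with (2 * j)%nat by lia.
  rewrite wallis_odd, Rmult_0_r, Rplus_0_r.
  assert (F1 := INR_fact_pos (2 * j)). assert (F2 := INR_fact_pos j).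
  assert (P4 : 0 < 4 ^ j) by (apply pow_lt; lra).
  replace (k ^ (2 * j) / INR (fact (2 * j)) * wallis (2 * j))
    with (k ^ (2 * j) * (wallis (2 * j) / INR (fact (2 * j)))) by (field; lra).
  rewrite wallis_even, half_pow. field. repeat split; lra.
Qed.

Lemma BesselI1_series (k : R) :
  is_series (fun j => (k / 2) ^ (2 * j + 1) / (INR (fact j) * INR (fact (j + 1))))
            (expcos_moment 1 k / (2 * PI)).
Proof.
  pose proof PI_RGT_0 as HPI.
  assert (H := is_series_scal_l (/ (2 * PI)) _ _ (series_pair _ _ (expcos_moment_series 1 k))).
  replace (expcos_moment 1 k / (2 * PI)) with (scal (/ (2 * PI)) (expcos_moment 1 k))
    by (unfold scal; simpl; unfold mult; simpl; field; lra).
  eapply is_series_ext; [| exact H].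
  intros j. unfold scal; simpl; unfold mult; simpl. rewrite ?Nat.add_0_r.
  replace (j + j)%nat with (2 * j)%nat by lia.
  replace (2 * j + 1 + 1)%nat with (2 * S j)%nat by lia.
  rewrite wallis_odd, Rmult_0_r, Rplus_0_l.
  assert (E := wallis_even (S j)).
  replace (fact (2 * S j)) with ((2 * j + 2) * fact (2 * j + 1))%nat in E
    by (replace (2 * S j)%nat with (S (2 * j + 1)) by lia; rewrite fact_simpl; f_equal; lia).
  replace (fact (S j)) with ((j + 1) * fact j)%nat in E by (rewrite fact_simpl; f_equal; lia).
  replace (fact (j + 1)) with ((j + 1) * fact j)%nat
    by (rewrite Nat.add_1_r, fact_simpl; f_equal; lia).
  rewrite !mult_INR, !plus_INR in *. simpl (INR 2) in *. simpl (INR 1) in *.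
  assert (F1 := INR_fact_pos (2 * j + 1)). assert (F2 := INR_fact_pos j).
  assert (P4 : 0 < 4 ^ j) by (apply pow_lt; lra). assert (Hj := pos_INR j).
  assert (EW : wallis (2 * S j) = 2 * PI / (4 ^ S j * ((INR j + 1) * INR (fact j)) ^ 2)
                                  * ((2 * INR j + 2) * INR (fact (2 * j + 1)))).
  { replace (2 * INR j + 2) with (INR (2 * j) + (1 + 1)) by (rewrite mult_INR; simpl; ring).
    rewrite <- E. field. assert (0 <= INR (2 * j)) by apply pos_INR. split; lra. }
  rewrite EW, !pow_add, half_pow. simpl pow. field. repeat split; lra.
Qed.

Lemma series_ge_first (a : nat -> R) (l : R) :
  is_series a l -> (forall n, 0 <= a n) -> a 0%nat <= l.
Proof.
  intros H Hp.
  assert (Hle : forall n, a 0%nat <= sum_n a n).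
  { intros n. rewrite sum_n_Reals.
    induction n as [| n IH]; simpl; [lra | specialize (Hp (S n)); lra]. }
  assert (Hl : is_lim_seq (sum_n a) l) by exact H.
  exact (is_lim_seq_le _ _ _ _ Hle (is_lim_seq_const (a 0%nat)) Hl).
Qed.

Lemma BesselI0_integral (k : R) : BesselI 0 k = expcos_moment 0 k / (2 * PI).
Proof. apply is_series_unique, BesselI0_series. Qed.

Lemma BesselI1_integral (k : R) : BesselI 1 k = expcos_moment 1 k / (2 * PI).
Proof. apply is_series_unique, BesselI1_series. Qed.

(* I_0 > 0 everywhere and I_1(k) > 0 for k > 0: the leading terms are 1 and k/2. *)
Lemma BesselI0_pos (k : R) : 0 < BesselI 0 k.
Proof.
  rewrite BesselI0_integral.
  eapply Rlt_le_trans; [| apply (series_ge_first _ _ (BesselI0_series k))]; simpl; [lra |].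
  intros n. apply Rmult_le_pos.
  - replace (n + (n + 0) + 0)%nat with (2 * n)%nat by lia.
    rewrite pow_mult. apply pow_le, pow2_ge_0.
  - left; apply Rinv_0_lt_compat, Rmult_lt_0_compat; apply INR_fact_pos.
Qed.

Lemma BesselI1_pos (k : R) : 0 < k -> 0 < BesselI 1 k.
Proof.
  intros Hk. rewrite BesselI1_integral.
  eapply Rlt_le_trans; [| apply (series_ge_first _ _ (BesselI1_series k))]; simpl; [lra |].
  intros n. apply Rmult_le_pos; [apply pow_le; lra |].
  left; apply Rinv_0_lt_compat, Rmult_lt_0_compat; apply INR_fact_pos.
Qed.

(* The odd moments of exp (k cos) vanish, being integrals of derivatives of even,
   2 pi-periodic functions: (-exp (k cos) / k)' = exp (k cos) sin and
   (exp (k cos) (1 - k cos) / k^2)' = exp (k cos) sin cos. *)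
Lemma expcos_sin_moment (k : R) : k <> 0 ->
  is_RInt (fun x => exp (k * cos x) * sin x) (-PI) PI 0.
Proof.
  intros Hk.
  replace 0 with (minus (- exp (k * cos PI) / k) (- exp (k * cos (-PI)) / k))
    by (rewrite cos_neg; unfold minus, plus, opp; simpl; field; lra).
  apply (is_RInt_derive (fun x => - exp (k * cos x) / k)).
  - intros x _. auto_derive; auto. field. exact Hk.
  - intros z _; revert z; solve_continuity.
Qed.

Lemma expcos_sincos_moment (k : R) : k <> 0 ->
  is_RInt (fun x => exp (k * cos x) * (sin x * cos x)) (-PI) PI 0.
Proof.
  intros Hk.
  replace 0 with (minus (exp (k * cos PI) / k^2 - cos PI * exp (k * cos PI) / k)
                        (exp (k * cos (-PI)) / k^2 - cos (-PI) * exp (k * cos (-PI)) / k))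
    by (rewrite cos_neg; unfold minus, plus, opp; simpl; ring).
  apply (is_RInt_derive (fun x => exp (k * cos x) / k^2 - cos x * exp (k * cos x) / k)).
  - intros x _. auto_derive; auto. field. exact Hk.
  - intros z _; revert z; solve_continuity.
Qed.

(* Integration by parts: k int exp (k cos) sin^2 = int exp (k cos) cos, because
   exp (k cos) cos - k exp (k cos) sin^2 is the derivative of exp (k cos) sin. *)
Lemma expcos_sin2_moment (k : R) : k <> 0 ->
  is_RInt (fun x => exp (k * cos x) * sin x ^ 2) (-PI) PI (expcos_moment 1 k / k).
Proof.
  intros Hk.
  assert (H1 : is_RInt (fun x => exp (k * cos x) * cos x - k * (exp (k * cos x) * sin x ^ 2))
                       (-PI) PI 0).
  { replace 0 with (minus (sin PI * exp (k * cos PI)) (sin (-PI) * exp (k * cos (-PI))))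
      by (rewrite sin_neg, sin_PI; unfold minus, plus, opp; simpl; ring).
    apply (is_RInt_derive (fun x => sin x * exp (k * cos x))).
    - intros x _. auto_derive; auto. ring.
    - intros z _; revert z; solve_continuity. }
  replace (expcos_moment 1 k / k) with (scal (/ k) (minus (expcos_moment 1 k) 0))
    by (unfold scal, minus, plus, opp; simpl; unfold mult; simpl; field; exact Hk).
  eapply is_RInt_ext;
    [| exact (is_RInt_scal _ _ _ _ _ (is_RInt_minus _ _ _ _ _ _ (expcos_moment_is 1 k) H1))].
  intros x _. unfold scal, minus, plus, opp; simpl; unfold mult; simpl. field. exact Hk.
Qed.

Lemma expcos_moment_0_pos (k : R) : 0 < expcos_moment 0 k.
Proof.
  pose proof PI_RGT_0 as HPI. pose proof (BesselI0_pos k) as H. rewrite BesselI0_integral in H.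
  apply (Rmult_lt_reg_r (/ (2 * PI))); [apply Rinv_0_lt_compat |]; lra.
Qed.

Lemma expcos_moment_1_pos (k : R) : 0 < k -> 0 < expcos_moment 1 k.
Proof.
  intros Hk. pose proof PI_RGT_0 as HPI. pose proof (BesselI1_pos k Hk) as H.
  rewrite BesselI1_integral in H.
  apply (Rmult_lt_reg_r (/ (2 * PI))); [apply Rinv_0_lt_compat |]; lra.
Qed.

Lemma p_vonMises_expcos (sigma t : R) :
  p_vonMises sigma t = / expcos_moment 0 (/ sigma ^ 2) * exp (/ sigma ^ 2 * cos t).
Proof.
  pose proof (expcos_moment_0_pos (/ sigma ^ 2)).
  unfold p_vonMises. rewrite BesselI0_integral. field. split; [lra | apply PI_neq0].
Qed.

Lemma vonMises_moment (sigma : R) (w : R -> R) (I : R) :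
  is_RInt (fun x => exp (/ sigma ^ 2 * cos x) * w x) (-PI) PI I ->
  is_RInt (fun x => p_vonMises sigma x * w x) (-PI) PI (I / expcos_moment 0 (/ sigma ^ 2)).
Proof.
  intros HI. pose proof (expcos_moment_0_pos (/ sigma ^ 2)).
  set (J0 := expcos_moment 0 (/ sigma ^ 2)) in *.
  replace (I / J0) with (scal (/ J0) I) by (unfold scal; simpl; unfold mult; simpl; field; lra).
  eapply is_RInt_ext; [| exact (is_RInt_scal _ _ _ _ _ HI)].
  intros x _. rewrite p_vonMises_expcos. fold J0. unfold scal; simpl; unfold mult; simpl. ring.
Qed.

Lemma F_vonMises_moment_fidelity (sigma : R) : 0 < sigma ->
  let k := / sigma ^ 2 in let J0 := expcos_moment 0 k in let J1 := expcos_moment 1 k in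
  0 <= J0 - J1 / k -> F_vonMises sigma = moment_fidelity 1 ((J0 - J1 / k) / J0) (J1 / J0).
Proof.
  intros Hs k J0 J1 HJ.
  assert (Hk : 0 < k) by (apply Rinv_0_lt_compat, pow_lt; lra).
  assert (HJ0 : 0 < J0) by apply expcos_moment_0_pos.
  assert (HJ1 : 0 < J1) by (apply expcos_moment_1_pos; exact Hk).
  unfold F_vonMises, moment_fidelity. rewrite BesselI0_integral, BesselI1_integral. fold k J0 J1.
  replace (sigma ^ 2) with (/ k) by (unfold k; field; lra).
  assert (0 < 2 * J0 * k - J1).
  { apply (Rmult_lt_reg_r (/ k)); [apply Rinv_0_lt_compat; lra |].
    replace ((2 * J0 * k - J1) * / k) with (J0 + (J0 - J1 / k)) by (field; lra). lra. }
  field. repeat split; try lra. apply PI_neq0.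
Qed.

(* With k = sigma^(-2), J0 = expcos_moment 0 k and
   J1 = expcos_moment 1 k, the moments of the von Mises density are
   Z = 1, A = J1 / J0, P = 1 - J1 / (k J0), and the odd ones vanish. *)
Lemma vonMises_stationary (sigma : R) : 0 < sigma ->
  (exists rho, is_stationary (p_vonMises sigma) rho) /\
  (forall rho, is_stationary (p_vonMises sigma) rho ->
     m11 rho = RtoC (F_vonMises sigma) /\ m12 rho = RtoC 0 /\ m21 rho = RtoC 0).
Proof.
  intros Hs.
  set (k := / sigma ^ 2).
  assert (Hk : 0 < k) by (apply Rinv_0_lt_compat, pow_lt; lra).
  set (J0 := expcos_moment 0 k). set (J1 := expcos_moment 1 k).
  assert (HJ0 : 0 < J0) by apply expcos_moment_0_pos.
  assert (Hp : forall t, -PI < t < PI -> 0 <= p_vonMises sigma t).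
  { intros t _. rewrite p_vonMises_expcos. fold k J0.
    apply Rmult_le_pos; [left; apply Rinv_0_lt_compat; lra | left; apply exp_pos]. }
  assert (HJ0int : is_RInt (fun x => exp (k * cos x)) (-PI) PI J0).
  { eapply is_RInt_ext; [| apply (expcos_moment_is 0 k)]. intros; simpl; ring. }
  assert (HZ : is_RInt (p_vonMises sigma) (-PI) PI 1).
  { replace 1 with (J0 / J0) by (field; lra).
    eapply is_RInt_ext; [| apply (vonMises_moment sigma (fun _ => 1))]; [intros; simpl; ring |].
    eapply is_RInt_ext; [| exact HJ0int]. intros x _. symmetry. apply Rmult_1_r. }
  assert (HA : is_RInt (fun x => p_vonMises sigma x * cos x) (-PI) PI (J1 / J0)).
  { apply (vonMises_moment sigma cos). eapply is_RInt_ext; [| apply (expcos_moment_is 1 k)].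
    intros x _. apply Rmult_eq_compat_l, pow_1. }
  assert (HP : is_RInt (fun x => p_vonMises sigma x * cos x ^ 2) (-PI) PI ((J0 - J1 / k) / J0)).
  { apply (vonMises_moment sigma (fun x => cos x ^ 2)).
    eapply is_RInt_ext;
      [| exact (is_RInt_minus _ _ _ _ _ _ HJ0int (expcos_sin2_moment k ltac:(lra)))].
    intros x _. unfold minus, plus, opp; simpl.
    pose proof (sin2_cos2 x) as E; unfold Rsqr in E. nsatz. }
  assert (HQ : is_RInt (fun x => p_vonMises sigma x * (sin x * cos x)) (-PI) PI 0).
  { replace 0 with (0 / J0) by (field; lra).
    apply (vonMises_moment sigma (fun x => sin x * cos x)), expcos_sincos_moment; fold k; lra. }
  assert (HS : is_RInt (fun x => p_vonMises sigma x * sin x) (-PI) PI 0).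
  { replace 0 with (0 / J0) by (field; lra).
    apply (vonMises_moment sigma sin), expcos_sin_moment; fold k; lra. }
  destruct (moment_bounds _ _ _ _ Hp HZ HP HA) as [[HP0 _] _].
  assert (HJ : 0 <= J0 - J1 / k).
  { replace (J0 - J1 / k) with ((J0 - J1 / k) / J0 * J0) by (field; lra).
    apply Rmult_le_pos; lra. }
  rewrite (F_vonMises_moment_fidelity sigma Hs HJ).
  exact (stationary_states _ 1 _ _ Hp ltac:(lra) HZ HP HA HQ HS).
Qed.

(* For large k the mass of exp (k cos) concentrates at theta = 0, where 1 - cos is
   small; the moments of the gap 1 - cos control the expansion in sigma. *)
Definition gap_moment (j : nat) (k : R) : R :=
  RInt (fun x => (1 - cos x) ^ j * exp (k * cos x)) (-PI) PI.

Lemma gap_moment_is (j : nat) (k : R) :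
  is_RInt (fun x => (1 - cos x) ^ j * exp (k * cos x)) (-PI) PI (gap_moment j k).
Proof.
  apply (RInt_correct (V := R_CompleteNormedModule)), ex_RInt_continuous.
  intros z _. revert z; solve_continuity.
Qed.

(* Three-term recursion, from integrating the derivative of sin (1 - cos)^j exp (k cos):
   with u = 1 - cos and sin^2 = u (2 - u), that derivative is
   exp (k cos) u^j ((2j + 1) - (j + 1 + 2k) u + k u^2). *)
Lemma gap_moment_rec (j : nat) (k : R) :
  (2 * INR j + 1) * gap_moment j k - (INR j + 1 + 2 * k) * gap_moment (S j) k
  + k * gap_moment (S (S j)) k = 0.
Proof.
  set (g := fun x => (2 * INR j + 1) * ((1 - cos x) ^ j * exp (k * cos x))
                     + (- (INR j + 1 + 2 * k)) * ((1 - cos x) ^ (S j) * exp (k * cos x))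
                     + k * ((1 - cos x) ^ (S (S j)) * exp (k * cos x))).
  assert (Hg : is_RInt g (-PI) PI 0).
  { replace 0 with (minus (sin PI * (1 - cos PI) ^ j * exp (k * cos PI))
                          (sin (-PI) * (1 - cos (-PI)) ^ j * exp (k * cos (-PI))))
      by (rewrite sin_neg, sin_PI; unfold minus, plus, opp; simpl; ring).
    apply (is_RInt_derive (fun x => sin x * (1 - cos x) ^ j * exp (k * cos x))).
    - intros x _. unfold g. auto_derive; auto.
      pose proof (sin2_cos2 x) as E; unfold Rsqr in E. set (ex := exp (k * cos x)).
      destruct j as [| j]; [simpl; nsatz |].
      simpl Init.Nat.pred. rewrite S_INR. simpl pow. set (v := (1 + - cos x) ^ j). nsatz.
    - intros x _. unfold g. revert x; solve_continuity. }
  assert (Hlin : is_RInt g (-PI) PI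
      ((2 * INR j + 1) * gap_moment j k + (- (INR j + 1 + 2 * k)) * gap_moment (S j) k
       + k * gap_moment (S (S j)) k)).
  { apply (is_RInt_plus (V := R_NormedModule)); [apply (is_RInt_plus (V := R_NormedModule)) |];
      apply (is_RInt_scal (V := R_NormedModule)); apply gap_moment_is. }
  pose proof (is_RInt_unique _ _ _ _ Hg). pose proof (is_RInt_unique _ _ _ _ Hlin).
  simpl in *. lra.
Qed.

(* exp y >= (y/4)^4 for y >= 0, from exp (y/4) >= y/4. *)
Lemma exp_ge_pow4 (y : R) : 0 <= y -> (y / 4) ^ 4 <= exp y.
Proof.
  intros Hy.
  assert (H : y / 4 <= exp (y / 4)).
  { destruct (Req_dec y 0) as [-> | E].
    - replace (0 / 4) with 0 by field. rewrite exp_0. lra.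
    - left. apply Rlt_trans with (1 + y / 4); [lra | apply exp_ineq1; lra]. }
  replace (exp y) with (exp (y / 4) ^ 4)
    by (simpl; rewrite Rmult_1_r, <- !exp_plus; f_equal; field).
  apply pow_incr; lra.
Qed.

(* Upper bound: (1 - cos)^4 exp (k cos) = (k (1 - cos))^4 exp (k cos) / k^4 <= 256 exp k / k^4. *)
Lemma gap_moment_4_upper (k : R) : 0 < k -> gap_moment 4 k <= 2 * PI * (256 * exp k / k ^ 4).
Proof.
  intros Hk. pose proof PI_RGT_0.
  assert (Hk4 : 0 < k ^ 4) by (apply pow_lt; lra).
  replace (2 * PI * _) with (scal (PI - - PI) (256 * exp k / k ^ 4))
    by (unfold scal; simpl; unfold mult; simpl; ring).
  apply (is_RInt_le _ _ (-PI) PI _ _ ltac:(lra) (gap_moment_is 4 k)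
           (is_RInt_const (V := R_NormedModule) _ _ _)).
  intros x _. set (u := 1 - cos x).
  assert (Hu : 0 <= u) by (unfold u; pose proof (COS_bound x); lra).
  pose proof (exp_ge_pow4 (k * u) ltac:(nra)).
  assert (Hsplit : exp (k * u) * exp (k * cos x) = exp k)
    by (rewrite <- exp_plus; f_equal; unfold u; ring).
  pose proof (exp_pos (k * cos x)).
  apply (Rmult_le_reg_r (k ^ 4)); [lra |].
  replace (256 * exp k / k ^ 4 * k ^ 4) with (256 * exp k) by (field; lra).
  replace (u ^ 4 * exp (k * cos x) * k ^ 4) with (256 * ((k * u / 4) ^ 4 * exp (k * cos x)))
    by field.
  apply Rmult_le_compat_l; [lra |]. rewrite <- Hsplit. apply Rmult_le_compat_r; lra.
Qed.

(* Lower bound: on [0, pi], exp (k cos) >= exp (k cos) sin, whose integral is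
   (exp k - exp (-k)) / k; the integral over [-pi, 0] is nonnegative. *)
Lemma gap_moment_0_lower (k : R) : 0 < k -> (exp k - exp (-k)) / k <= gap_moment 0 k.
Proof.
  intros Hk. pose proof PI_RGT_0.
  assert (Hex : forall a b, ex_RInt (fun x => (1 - cos x) ^ 0 * exp (k * cos x)) a b).
  { intros a b. apply (ex_RInt_continuous (V := R_CompleteNormedModule)).
    intros z _. revert z; solve_continuity. }
  unfold gap_moment.
  rewrite <- (RInt_Chasles (V := R_CompleteNormedModule) _ (-PI) 0 PI (Hex _ _) (Hex _ _)).
  assert (Hneg : 0 <= RInt (fun x => (1 - cos x) ^ 0 * exp (k * cos x)) (-PI) 0).
  { apply (is_RInt_ge_0 (fun x => (1 - cos x) ^ 0 * exp (k * cos x)) (-PI) 0);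
      [lra | apply (RInt_correct (V := R_CompleteNormedModule)), Hex |].
    intros x _. simpl. rewrite Rmult_1_l. left; apply exp_pos. }
  assert (Hsin : is_RInt (fun x => exp (k * cos x) * sin x) 0 PI ((exp k - exp (-k)) / k)).
  { replace ((exp k - exp (-k)) / k) with (minus (- exp (k * cos PI) / k) (- exp (k * cos 0) / k))
      by (rewrite cos_PI, cos_0; unfold minus, plus, opp; simpl;
          replace (k * -1) with (-k) by ring; rewrite Rmult_1_r; field; lra).
    apply (is_RInt_derive (fun x => - exp (k * cos x) / k)).
    - intros x _. auto_derive; auto. field. lra.
    - intros z _; revert z; solve_continuity. }
  assert (Hpos : (exp k - exp (-k)) / k <= RInt (fun x => (1 - cos x) ^ 0 * exp (k * cos x)) 0 PI).
  { apply (is_RInt_le _ _ 0 PI _ _ ltac:(lra) Hsin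
             (RInt_correct (V := R_CompleteNormedModule) _ _ _ (Hex _ _))).
    intros x _. simpl. rewrite Rmult_1_l.
    pose proof (SIN_bound x). pose proof (exp_pos (k * cos x)). nra. }
  unfold plus; simpl in *. lra.
Qed.

Lemma gap_moment_4_small (k : R) : 1 < k -> gap_moment 4 k <= 4096 * gap_moment 0 k / k ^ 3.
Proof.
  intros Hk. pose proof PI_RGT_0. pose proof PI_4.
  pose proof (gap_moment_0_lower k ltac:(lra)) as L0.
  pose proof (gap_moment_4_upper k ltac:(lra)) as U4.
  assert (Hek : 2 <= exp k) by (pose proof (exp_ineq1 k ltac:(lra)); lra).
  assert (Hemk : exp (-k) * exp k = 1)
    by (rewrite <- exp_plus; replace (-k + k) with 0 by ring; apply exp_0).
  assert (Hk3 : 0 < k ^ 3) by (apply pow_lt; lra).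
  assert (L0' : exp k / (2 * k) <= gap_moment 0 k).
  { eapply Rle_trans; [| exact L0].
    apply (Rmult_le_reg_r k); [lra |]. unfold Rdiv. field_simplify; nra. }
  apply Rle_trans with (2 * PI * (256 * exp k / k ^ 4)); [exact U4 |].
  replace (2 * PI * (256 * exp k / k ^ 4)) with (1024 * PI / k ^ 3 * (exp k / (2 * k)))
    by (field; lra).
  replace (4096 * gap_moment 0 k / k ^ 3) with (4096 / k ^ 3 * gap_moment 0 k) by (field; lra).
  assert (Hc : 0 <= 1024 * PI / k ^ 3 <= 4096 / k ^ 3).
  { unfold Rdiv. assert (0 < / k ^ 3) by (apply Rinv_0_lt_compat; lra). split; nra. }
  assert (0 <= exp k / (2 * k))
    by (apply Rlt_le, Rdiv_lt_0_compat; [apply exp_pos | lra]).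
  apply Rle_trans with (1024 * PI / k ^ 3 * gap_moment 0 k).
  - apply Rmult_le_compat_l; lra.
  - apply Rmult_le_compat_r; lra.
Qed.

(* Eliminating M2 and M3 from the first three gap recursions expresses M1 through
   M0 and the (small) fourth moment M4. *)
Lemma gap_elimination (k M0 M1 M2 M3 M4 : R) :
  M0 - (1 + 2 * k) * M1 + k * M2 = 0 ->
  3 * M1 - (2 + 2 * k) * M2 + k * M3 = 0 ->
  5 * M2 - (3 + 2 * k) * M3 + k * M4 = 0 ->
  (8 * k ^ 3 + 8 * k ^ 2 + 8 * k + 6) * M1 = k ^ 3 * M4 + (4 * k ^ 2 + 5 * k + 6) * M0.
Proof.
  intros E0 E1 E2.
  assert (H : k ^ 2 * (5 * M2 - (3 + 2 * k) * M3 + k * M4)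
              + (2 * k ^ 2 + 3 * k) * (3 * M1 - (2 + 2 * k) * M2 + k * M3)
              + (4 * k ^ 2 + 5 * k + 6) * (M0 - (1 + 2 * k) * M1 + k * M2)
              = k ^ 3 * M4 + (4 * k ^ 2 + 5 * k + 6) * M0
                - (8 * k ^ 3 + 8 * k ^ 2 + 8 * k + 6) * M1) by ring.
  rewrite E0, E1, E2 in H. lra.
Qed.

(* The final estimate, as pure algebra in t = sigma^2, the ratio r = M1 / M0 and the
   relative fourth moment m = M4 / M0 = O(t^3):
   1/2 + 1 / (2 / (1 - r) - t) = 1 - 3 t^2 / 16 + O(t^3). *)
Lemma vonMises_error_bound (t r m : R) :
  0 < t < 1 -> 0 <= m <= 4096 * t ^ 3 -> r < 1 ->
  (8 + 8 * t + 8 * t ^ 2 + 6 * t ^ 3) * r = m + (4 * t + 5 * t ^ 2 + 6 * t ^ 3) ->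
  Rabs (1 / 2 + / (2 / (1 - r) - t) - (1 - 3 / 16 * t ^ 2)) <= 1000 * t ^ 3.
Proof.
  intros Ht Hm Hr Hrel.
  set (D := 8 + 8 * t + 8 * t ^ 2 + 6 * t ^ 3).
  assert (HD : 0 < D) by (unfold D; nra).
  set (n := 8 + 4 * t + 3 * t ^ 2 - m).
  assert (Hn : 1 - r = n / D) by (unfold n, D in *; field_simplify_eq; lra).
  assert (Hnpos : 0 < n) by (assert (0 < n / D) by lra;
                              replace n with (n / D * D) by (field; lra); nra).
  set (den := 16 + 8 * t + 12 * t ^ 2 + 9 * t ^ 3 + t * m).
  assert (Hden : 16 <= den) by (unfold den; nra).
  set (num := -48 * t ^ 3 + 36 * t ^ 4 + 27 * t ^ 5 - m * (16 + 8 * t - 3 * t ^ 3)).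
  replace (1 / 2 + / (2 / (1 - r) - t) - (1 - 3 / 16 * t ^ 2)) with (num / (16 * den)).
  2: { rewrite Hn. unfold num, den, n, D. field. unfold n, D in *. split; [| split]; nra. }
  assert (t3 : 0 < t ^ 3) by (apply pow_lt; lra).
  assert (Hnum : Rabs num <= 110703 * t ^ 3).
  { assert (Hc : 0 <= 16 + 8 * t - 3 * t ^ 3 <= 24) by (split; nra).
    assert (0 <= t ^ 4 <= t ^ 3) by (split; nra).
    assert (0 <= t ^ 5 <= t ^ 3) by (split; nra).
    assert (0 <= m * (16 + 8 * t - 3 * t ^ 3) <= 24 * (4096 * t ^ 3)) by (split; nra).
    unfold num. apply Rabs_le. split; lra. }
  rewrite Rabs_div, (Rabs_right (16 * den)) by lra.
  apply (Rmult_le_reg_r (16 * den)); [lra |].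
  unfold Rdiv. rewrite Rmult_assoc, Rinv_l, Rmult_1_r by lra. nra.
Qed.

Lemma expcos_moment_0_gap (k : R) : expcos_moment 0 k = gap_moment 0 k.
Proof.
  apply (is_RInt_unique (V := R_CompleteNormedModule)).
  eapply is_RInt_ext; [| apply gap_moment_is]. intros x _. simpl. ring.
Qed.

Lemma expcos_moment_1_gap (k : R) : expcos_moment 1 k = gap_moment 0 k - gap_moment 1 k.
Proof.
  apply (is_RInt_unique (V := R_CompleteNormedModule)).
  eapply is_RInt_ext; [| exact (is_RInt_minus _ _ _ _ _ _ (gap_moment_is 0 k) (gap_moment_is 1 k))].
  intros x _. unfold minus, plus, opp; simpl. ring.
Qed.

(* The recursions at j = 0, 1, 2, written in t = 1/k and normalized by M0:
   D(t) M1 / M0 = M4 / M0 + Q(t). *)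
Lemma gap_ratio_relation (t : R) : 0 < t ->
  (8 + 8 * t + 8 * t ^ 2 + 6 * t ^ 3) * (gap_moment 1 (/ t) / gap_moment 0 (/ t))
  = gap_moment 4 (/ t) / gap_moment 0 (/ t) + (4 * t + 5 * t ^ 2 + 6 * t ^ 3).
Proof.
  intros Ht. set (k := / t).
  set (M0 := gap_moment 0 k). set (M1 := gap_moment 1 k). set (M4 := gap_moment 4 k).
  assert (HM0 : 0 < M0) by (unfold M0; rewrite <- expcos_moment_0_gap; apply expcos_moment_0_pos).
  pose proof (gap_moment_rec 0 k) as E0. pose proof (gap_moment_rec 1 k) as E1.
  pose proof (gap_moment_rec 2 k) as E2. simpl INR in E0, E1, E2. fold M0 M1 M4 in E0, E1, E2.
  assert (Helim := gap_elimination k M0 M1 (gap_moment 2 k) (gap_moment 3 k) M4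
                     ltac:(lra) ltac:(lra) ltac:(lra)).
  assert (Hk3 : 0 < k ^ 3) by (apply pow_lt; unfold k; apply Rinv_0_lt_compat; lra).
  apply (Rmult_eq_reg_r (k ^ 3 * M0)); [| apply Rgt_not_eq, Rmult_lt_0_compat; lra].
  replace ((8 + 8 * t + 8 * t ^ 2 + 6 * t ^ 3) * (M1 / M0) * (k ^ 3 * M0))
    with ((8 * k ^ 3 + 8 * k ^ 2 + 8 * k + 6) * M1) by (unfold k; field; lra).
  rewrite Helim. unfold k; field; lra.
Qed.

(* In terms
   of t = sigma^2 = 1 / k and the gap moments M_j, F = 1/2 + 1 / (2 / (1 - M1/M0) - t),
   and the recursions give M1 / M0 up to the term M4 / M0 = O(t^3). *)
Lemma vonMises_expansion : exists K delta : R, 0 < delta /\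
  forall sigma : R, 0 < sigma < delta ->
    Rabs (F_vonMises sigma - (1 - 3 / 16 * sigma ^ 4)) <= K * sigma ^ 6.
Proof.
  exists 1000, 1. split; [lra |]. intros sigma Hs. pose proof PI_RGT_0 as HPI.
  set (t := sigma ^ 2). set (k := / t).
  assert (Ht : 0 < t < 1) by (unfold t; split; nra).
  assert (Hk : 1 < k) by (unfold k; rewrite <- Rinv_1; apply Rinv_lt_contravar; lra).
  set (M0 := gap_moment 0 k). set (M1 := gap_moment 1 k). set (M4 := gap_moment 4 k).
  assert (HM0 : 0 < M0) by (unfold M0; rewrite <- expcos_moment_0_gap; apply expcos_moment_0_pos).
  assert (HM01 : 0 < M0 - M1)
    by (unfold M0, M1; rewrite <- expcos_moment_1_gap; apply expcos_moment_1_pos; lra).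
  assert (HM4 : 0 <= M4).
  { apply (is_RInt_ge_0 _ (-PI) PI _ ltac:(lra) (gap_moment_is 4 k)). intros x _.
    apply Rmult_le_pos; [apply pow_le; pose proof (COS_bound x); lra | left; apply exp_pos]. }
  assert (HM4small : M4 <= 4096 * t ^ 3 * M0).
  { replace (4096 * t ^ 3 * M0) with (4096 * M0 / k ^ 3)
      by (unfold k; rewrite pow_inv; field; lra).
    apply gap_moment_4_small; exact Hk. }
  replace (F_vonMises sigma) with (1 / 2 + / (2 / (1 - M1 / M0) - t)).
  2: { unfold F_vonMises. rewrite BesselI0_integral, BesselI1_integral,
         expcos_moment_0_gap, expcos_moment_1_gap. fold t k M0 M1. f_equal. f_equal. field.
       repeat split; lra. }
  replace (sigma ^ 4) with (t ^ 2) by (unfold t; ring).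
  replace (sigma ^ 6) with (t ^ 3) by (unfold t; ring).
  apply (vonMises_error_bound t (M1 / M0) (M4 / M0));
    [exact Ht | | | apply gap_ratio_relation; lra].
  - split; [apply Rdiv_le_0_compat; lra |].
    apply (Rmult_le_reg_r M0); [lra |]. unfold Rdiv. rewrite Rmult_assoc, Rinv_l; lra.
  - assert (H : 0 < (M0 - M1) / M0) by (apply Rdiv_lt_0_compat; lra).
    replace ((M0 - M1) / M0) with (1 - M1 / M0) in H by (field; lra). lra.
Qed.

Theorem mainTheorem10 :
  (* (i) uniform distribution on [-tt, tt] *)
  ((forall tt : R, 0 < tt <= PI ->
      (exists rho, is_stationary (p_uniform tt) rho) /\
      (forall rho, is_stationary (p_uniform tt) rho ->
         m11 rho = RtoC (F_uniform tt) /\ m12 rho = RtoC 0 /\ m21 rho = RtoC 0)) /\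
   (exists K delta : R, 0 < delta /\
      forall tt : R, 0 < tt < delta ->
        Rabs (F_uniform tt - (1 - tt ^ 4 / 80)) <= K * tt ^ 6)) /\
  (* (ii) von Mises distribution *)
  ((forall sigma : R, 0 < sigma ->
      (exists rho, is_stationary (p_vonMises sigma) rho) /\
      (forall rho, is_stationary (p_vonMises sigma) rho ->
         m11 rho = RtoC (F_vonMises sigma) /\ m12 rho = RtoC 0 /\ m21 rho = RtoC 0)) /\
   (exists K delta : R, 0 < delta /\
      forall sigma : R, 0 < sigma < delta ->
        Rabs (F_vonMises sigma - (1 - 3 / 16 * sigma ^ 4)) <= K * sigma ^ 6)).
Proof.
  split; split.
  - exact uniform_stationary.
  - exact uniform_expansion.
  - exact vonMises_stationary.
  - exact vonMises_expansion.
Qed.
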